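(* Every $\mathbb{R}$-tree is $(1,2)$-quasi-isometric to a simplicial tree; that is, for every $\mathbb{R}$-tree $T$ there exist a simplicial tree $\Gamma$ and a $(1,2)$-quasi-isometry $T\to\Gamma$.
   Context: An $\mathbb{R}$-tree is a metric space in which any two points are joined by a unique topological arc, which is a geodesic. A simplicial tree is a 1-dimensional simplicial complex which is an $\mathbb{R}$-tree for the path metric with edges isometric to $[0,1]$. A map $f:(X,d_X)\to(Y,d_Y)$ is a $(1,C)$-quasi-isometry if $d_X(a,b)-C\leqslant d_Y(f(a),f(b))\leqslant d_X(a,b)+C$ for all $a,b$ and every $y\in Y$ is within distance $C$ of $f(X)$. *)

From Stdlib Require Import Reals.
Open Scope R_scope.

Definition is_metric {X : Type} (d : X -> X -> R) : Prop :=
  (forall x y, 0 <= d x y) /\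
  (forall x y, d x y = 0 <-> x = y) /\
  (forall x y, d x y = d y x) /\
  (forall x y z, d x z <= d x y + d y z).

Definition in01 (s : R) : Prop := 0 <= s <= 1.

Definition is_arc {X : Type} (d : X -> X -> R) (a b : X) (A : X -> Prop) : Prop :=
  exists gamma : R -> X,
    gamma 0 = a /\ gamma 1 = b /\
    (forall s, in01 s -> forall eps, 0 < eps -> exists delta, 0 < delta /\
        forall s', in01 s' -> Rabs (s - s') < delta -> d (gamma s) (gamma s') < eps) /\
    (forall s s', in01 s -> in01 s' -> gamma s = gamma s' -> s = s') /\
    (forall x, A x <-> exists s, in01 s /\ gamma s = x).

Definition is_geodesic_segment {X : Type} (d : X -> X -> R) (a b : X) (A : X -> Prop) : Prop :=
  exists sigma : R -> X,
    sigma 0 = a /\ sigma (d a b) = b /\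
    (forall s t, 0 <= s <= d a b -> 0 <= t <= d a b ->
        d (sigma s) (sigma t) = Rabs (s - t)) /\
    (forall x, A x <-> exists s, 0 <= s <= d a b /\ sigma s = x).

Definition is_R_tree {X : Type} (d : X -> X -> R) : Prop :=
  is_metric d /\
  forall a b : X, a <> b ->
    exists A : X -> Prop,
      is_arc d a b A /\ is_geodesic_segment d a b A /\
      forall B : X -> Prop, is_arc d a b B -> forall x, B x <-> A x.

Definition simplicial_graph {V E : Type} (src tgt : E -> V) : Prop :=
  (forall e, src e <> tgt e) /\
  (forall e e', ((src e = src e' /\ tgt e = tgt e') \/
                 (src e = tgt e' /\ tgt e = src e')) -> e = e').

(** Points of the geometric realization: vertices, and interior points of
    edges (edge [e] is identified with [0,1], [0 ~ src e], [1 ~ tgt e]). *)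
Inductive real_pt (V E : Type) : Type :=
  | RV : V -> real_pt V E
  | RE : E -> {t : R | 0 < t < 1} -> real_pt V E.
Arguments RV {V E} _.
Arguments RE {V E} _ _.

Definition on_edge {V E : Type} (src tgt : E -> V) (e : E) (p : real_pt V E) (t : R) : Prop :=
  (p = RV (src e) /\ t = 0) \/ (p = RV (tgt e) /\ t = 1) \/
  (exists h : 0 < t < 1, p = RE e (exist _ t h)).

Definition edge_step {V E : Type} (src tgt : E -> V) (p q : real_pt V E) (c : R) : Prop :=
  exists e s t, on_edge src tgt e p s /\ on_edge src tgt e q t /\ c = Rabs (s - t).

Inductive chain {V E : Type} (src tgt : E -> V) : real_pt V E -> real_pt V E -> R -> Prop :=
  | chain_nil : forall p, chain src tgt p p 0
  | chain_cons : forall p r q c L,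
      edge_step src tgt p r c -> chain src tgt r q L -> chain src tgt p q (c + L).

Definition is_path_metric {V E : Type} (src tgt : E -> V)
    (D : real_pt V E -> real_pt V E -> R) : Prop :=
  forall p q,
    (forall L, chain src tgt p q L -> D p q <= L) /\
    (forall m, (forall L, chain src tgt p q L -> m <= L) -> m <= D p q).

Definition is_simplicial_tree {V E : Type} (src tgt : E -> V)
    (D : real_pt V E -> real_pt V E -> R) : Prop :=
  simplicial_graph src tgt /\ is_path_metric src tgt D /\ is_R_tree D.

Definition is_1C_quasi_isometry {X Y : Type} (dX : X -> X -> R) (dY : Y -> Y -> R)
    (C : R) (f : X -> Y) : Prop :=
  (forall a b, dX a b - C <= dY (f a) (f b) /\ dY (f a) (f b) <= dX a b + C) /\
  (forall y, exists x, dY y (f x) <= C).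

From Stdlib Require Import Reals Lra Lia Classical ClassicalEpsilon ProofIrrelevance.
Open Scope R_scope.

(* Fix a base point [x0] of the R-tree and write [(x|y)] for the Gromov product at [x0].
   The vertices of the simplicial tree are the points at integer distance from [x0], each
   vertex [z <> x0] being joined to the point of the geodesic [x0, z] one unit closer to [x0].
   A point [p] of the realization is determined by its height [h p] and the upper end [top p]
   of its cell, and the path metric is [h p + h q - 2 m p q] with
   [m p q = min (h p, h q, floor (top p | top q))].  R-trees are 0-hyperbolic, i.e.
   [min ((x|y), (y|z)) <= (x|z)]; this survives taking integer parts, so [m] is an
   ultrametric-like meet, and a geodesic space whose metric comes from such a meet satisfies
   the four-point condition, which forces arcs to be unique, so the realization is an R-tree.
   Sending [x] to the vertex of [x0, x] at height [floor (d x0 x)] changes [d x0 x] and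
   [(x|y)] by less than 1 each, whence the additive constant 2. *)

Lemma Rmin_cases a b : (a <= b /\ Rmin a b = a) \/ (b < a /\ Rmin a b = b).
Proof. unfold Rmin; destruct (Rle_dec a b); [left|right]; lra. Qed.

Lemma Rmax_cases a b : (a <= b /\ Rmax a b = b) \/ (b < a /\ Rmax a b = a).
Proof. unfold Rmax; destruct (Rle_dec a b); [left|right]; lra. Qed.

Ltac destruct_min_max :=
  repeat match goal with
  | |- context [Rmin ?a ?b] =>
      let E := fresh in destruct (Rmin_cases a b) as [[? E]|[? E]]; rewrite E in *; clear E
  | |- context [Rmax ?a ?b] =>
      let E := fresh in destruct (Rmax_cases a b) as [[? E]|[? E]]; rewrite E in *; clear E
  | H : context [Rmin ?a ?b] |- _ =>
      lazymatch type of H with forall _, _ => fail | _ =>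
      let E := fresh in destruct (Rmin_cases a b) as [[? E]|[? E]]; rewrite E in *; clear E end
  | H : context [Rmax ?a ?b] |- _ =>
      lazymatch type of H with forall _, _ => fail | _ =>
      let E := fresh in destruct (Rmax_cases a b) as [[? E]|[? E]]; rewrite E in *; clear E end
  end.

Ltac destruct_abs :=
  repeat match goal with
  | |- context [Rabs ?a] =>
      destruct (Rcase_abs a); [rewrite (Rabs_left a) in * by lra | rewrite (Rabs_right a) in * by lra]
  | H : context [Rabs ?a] |- _ =>
      destruct (Rcase_abs a); [rewrite (Rabs_left a) in * by lra | rewrite (Rabs_right a) in * by lra]
  end.

Definition continuous_on {P : Type} (D : P -> P -> R) (g : R -> P) (u v : R) : Prop :=
  forall s, u <= s <= v -> forall eps, 0 < eps -> exists delta, 0 < delta /\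
    forall s', u <= s' <= v -> Rabs (s - s') < delta -> D (g s) (g s') < eps.

Lemma continuous_on_sub {P : Type} (D : P -> P -> R) g u v u' v' :
  u <= u' -> v' <= v -> continuous_on D g u v -> continuous_on D g u' v'.
Proof.
  intros Hu Hv Hc s Hs eps He. destruct (Hc s ltac:(lra) eps He) as [dl [Hdl Hd]].
  exists dl; split; [exact Hdl|]. intros s' Hs'; apply Hd; lra.
Qed.

Lemma continuous_on_reverse {P : Type} (D : P -> P -> R) g u v :
  continuous_on D g u v -> continuous_on D (fun s => g (- s)) (- v) (- u).
Proof.
  intros Hc s Hs eps He. destruct (Hc (- s) ltac:(lra) eps He) as [dl [Hdl Hd]].
  exists dl; split; [exact Hdl|]. intros s' Hs' Hss. apply Hd; [lra|].
  replace (- s - - s') with (- (s - s')) by ring. rewrite Rabs_Ropp. exact Hss.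
Qed.

Lemma lipschitz_continuous_on {P : Type} (D : P -> P -> R) g u v K :
  0 < K -> (forall s s', u <= s <= v -> u <= s' <= v -> D (g s) (g s') <= K * Rabs (s - s')) ->
  continuous_on D g u v.
Proof.
  intros HK Hl s Hs eps He. exists (eps / K). split; [apply Rdiv_lt_0_compat; lra|].
  intros s' Hs' Hd. specialize (Hl s s' Hs Hs').
  assert (K * Rabs (s - s') < K * (eps / K)) by (apply Rmult_lt_compat_l; lra).
  replace (K * (eps / K)) with eps in H by (field; lra). lra.
Qed.

Lemma continuous_least_zero (phi : R -> R) u v :
  u <= v -> continuous_on R_dist phi u v -> phi v = 0 ->
  exists s0, u <= s0 <= v /\ phi s0 = 0 /\ forall s, u <= s <= v -> phi s = 0 -> s0 <= s.
Proof.
  intros Huv Hc Hv.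
  (* [completeness] only provides suprema, so take minus the supremum of the opposite zeros *)
  set (Z := fun r => u <= - r <= v /\ phi (- r) = 0).
  assert (Hb : bound Z) by (exists (- u); intros r [Hr _]; lra).
  assert (Hne : exists r, Z r) by (exists (- v); unfold Z; rewrite Ropp_involutive; split; [lra|exact Hv]).
  destruct (completeness Z Hb Hne) as [l [Hub Hlub]].
  assert (Hlow : forall s, u <= s <= v -> phi s = 0 -> - l <= s).
  { intros s Hs Hp. assert (HZ : Z (- s)) by (unfold Z; rewrite Ropp_involutive; tauto).
    specialize (Hub _ HZ). lra. }
  assert (Hu : u <= - l) by (assert (l <= - u) by (apply Hlub; intros r [Hr _]; lra); lra).
  assert (Hvl : - l <= v) by (apply Hlow; [lra|exact Hv]).
  exists (- l). split; [lra|]. split; [|exact Hlow].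
  destruct (Req_dec (phi (- l)) 0) as [Hz|Hnz]; [exact Hz|exfalso].
  assert (Heta : 0 < Rabs (phi (- l))) by (apply Rabs_pos_lt; exact Hnz).
  destruct (Hc (- l) (conj Hu Hvl) _ Heta) as [dl [Hdl Hcd]]. unfold R_dist in Hcd.
  destruct (classic (exists s, u <= s <= v /\ phi s = 0 /\ s < - l + dl)) as [[s [Hs [Hps Hsl]]]|Hno].
  - assert (- l <= s) by (apply Hlow; assumption).
    assert (Rabs (- l - s) < dl) by (destruct_abs; lra).
    specialize (Hcd s Hs H0). rewrite Hps, Rminus_0_r in Hcd. lra.
  - assert (l <= l - dl); [|lra].
    apply Hlub. intros r [Hr Hpr].
    destruct (Rle_dec r (l - dl)) as [?|Hn]; [assumption|].
    exfalso; apply Hno. exists (- r). split; [lra|]. split; [exact Hpr|lra].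
Qed.

Definition is_geodesic {P : Type} (D : P -> P -> R) (sg : R -> P) (a b : P) (L : R) : Prop :=
  0 <= L /\ sg 0 = a /\ sg L = b /\
  forall s t, 0 <= s <= L -> 0 <= t <= L -> D (sg s) (sg t) = Rabs (s - t).

Definition between {P : Type} (D : P -> P -> R) (x z y : P) : Prop := D x z + D z y = D x y.

Definition gromov {P : Type} (D : P -> P -> R) (a x y : P) : R := (D a x + D a y - D x y) / 2.

Definition four_point {P : Type} (D : P -> P -> R) : Prop :=
  forall x y z w, D x y + D z w <= Rmax (D x z + D y w) (D x w + D y z).

Lemma geodesic_dist {P : Type} (D : P -> P -> R) sg a b L : is_geodesic D sg a b L -> D a b = L.
Proof. intros [HL [H0 [H1 H]]]. rewrite <- H0, <- H1, H by lra. destruct_abs; lra. Qed.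

Lemma geodesic_point {P : Type} (D : P -> P -> R) sg a b L s :
  is_geodesic D sg a b L -> 0 <= s <= L -> D a (sg s) = s /\ D (sg s) b = L - s.
Proof.
  intros [_ [H0 [H1 H]]] Hs.
  split; [rewrite <- H0, H by lra|rewrite <- H1, H by lra]; destruct_abs; lra.
Qed.

Lemma geodesic_between {P : Type} (D : P -> P -> R) sg a b L s :
  is_geodesic D sg a b L -> 0 <= s <= L -> between D a (sg s) b.
Proof.
  intros Hg Hs. unfold between. rewrite (geodesic_dist _ _ _ _ _ Hg).
  destruct (geodesic_point _ _ _ _ _ s Hg Hs). lra.
Qed.

Lemma geodesic_restrict {P : Type} (D : P -> P -> R) sg a b L s :
  is_geodesic D sg a b L -> 0 <= s <= L -> is_geodesic D sg a (sg s) s.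
Proof.
  intros (HL & H0 & H1 & H) Hs. split; [lra|]. split; [exact H0|]. split; [reflexivity|].
  intros; apply H; lra.
Qed.

Lemma dist_gromov {P : Type} (D : P -> P -> R) a x y : D x y = D a x + D a y - 2 * gromov D a x y.
Proof. unfold gromov. field. Qed.

Section MetricSpace.
Context {P : Type} {D : P -> P -> R} (HD : is_metric D).

Lemma metric_ge0 x y : 0 <= D x y.
Proof. apply HD. Qed.

Lemma metric_eq0 x y : D x y = 0 -> x = y.
Proof. apply HD. Qed.

Lemma metric_refl x : D x x = 0.
Proof. apply HD; reflexivity. Qed.

Lemma metric_sym x y : D x y = D y x.
Proof. apply HD. Qed.

Lemma metric_triangle x y z : D x z <= D x y + D y z.
Proof. apply HD. Qed.

Lemma metric_pos x y : x <> y -> 0 < D x y.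
Proof.
  intros Hxy. destruct (metric_ge0 x y) as [?|E]; [assumption|]. exfalso; apply Hxy, metric_eq0; auto.
Qed.

Lemma gromov_sym a x y : gromov D a x y = gromov D a y x.
Proof. unfold gromov. rewrite (metric_sym x y). lra. Qed.

Lemma gromov_self a x : gromov D a x x = D a x.
Proof. unfold gromov. rewrite metric_refl. lra. Qed.

Lemma gromov_ge0 a x y : 0 <= gromov D a x y.
Proof. unfold gromov. pose proof (metric_triangle x a y). rewrite (metric_sym x a) in H. lra. Qed.

Lemma gromov_le_l a x y : gromov D a x y <= D a x.
Proof. unfold gromov. pose proof (metric_triangle a x y). lra. Qed.

Lemma gromov_le_r a x y : gromov D a x y <= D a y.
Proof. rewrite gromov_sym. apply gromov_le_l. Qed.

Lemma eq_of_gromov a x y : D a x = D a y -> gromov D a x y = D a x -> x = y.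
Proof. intros. apply metric_eq0. rewrite (dist_gromov D a). lra. Qed.

Lemma geodesic_arc sg a b L :
  is_geodesic D sg a b L -> 0 < L -> is_arc D a b (fun x => exists s, 0 <= s <= L /\ sg s = x).
Proof.
  intros Hg HL. pose proof Hg as [_ [H0 [H1 H]]].
  exists (fun s => sg (s * L)). split; [rewrite Rmult_0_l; exact H0|].
  split; [rewrite Rmult_1_l; exact H1|]. split; [|split].
  - apply (lipschitz_continuous_on D _ 0 1 L HL).
    intros s s' Hs Hs'. rewrite H by nra.
    rewrite <- Rmult_minus_distr_r, Rabs_mult, (Rabs_right L) by lra. lra.
  - intros s s' Hs Hs' E. unfold in01 in *.
    assert (E0 : D (sg (s * L)) (sg (s' * L)) = 0) by (rewrite E; apply metric_refl).
    rewrite H, <- Rmult_minus_distr_r, Rabs_mult, (Rabs_right L) in E0 by nra.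
    assert (Rabs (s - s') = 0) by nra. destruct_abs; lra.
  - intros x. split.
    + intros [s [Hs E]]. exists (s / L). split.
      * unfold in01. split; [apply Rle_mult_inv_pos; lra|].
        apply (Rmult_le_reg_r L); [lra|]. field_simplify; lra.
      * replace (s / L * L) with s by (field; lra). exact E.
    + intros [s [Hs E]]. exists (s * L). unfold in01 in Hs. split; [nra|exact E].
Qed.

Section Concatenation.
Variables (g1 g2 : R -> P) (a c b : P) (L1 L2 : R).
Hypotheses (G1 : is_geodesic D g1 a c L1) (G2 : is_geodesic D g2 c b L2) (HL1 : 0 < L1) (HL2 : 0 < L2).

Definition concat_path (s : R) : P :=
  if Rle_dec s (1/2) then g1 (2 * s * L1) else g2 ((2 * s - 1) * L2).

Lemma concat_path_continuous : continuous_on D concat_path 0 1.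
Proof.
  destruct G1 as [_ [A0 [A1 HA]]], G2 as [_ [B0 [B1 HB]]].
  apply (lipschitz_continuous_on D _ 0 1 (2 * (L1 + L2))); [lra|].
  intros s s' Hs Hs'. unfold concat_path.
  assert (0 <= Rabs (s - s')) by apply Rabs_pos.
  destruct (Rle_dec s (1/2)); destruct (Rle_dec s' (1/2)).
  - rewrite HA by nra. replace (2 * s * L1 - 2 * s' * L1) with ((s - s') * (2 * L1)) by ring.
    rewrite Rabs_mult, (Rabs_right (2 * L1)) by lra. nra.
  - eapply Rle_trans; [apply (metric_triangle _ c)|].
    rewrite <- A1 at 1. rewrite <- B0 at 1. rewrite HA, HB by nra. destruct_abs; nra.
  - eapply Rle_trans; [apply (metric_triangle _ c)|].
    rewrite <- A1 at 2. rewrite <- B0 at 1. rewrite HA, HB by nra. destruct_abs; nra.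
  - rewrite HB by nra. replace ((2 * s - 1) * L2 - (2 * s' - 1) * L2) with ((s - s') * (2 * L2)) by ring.
    rewrite Rabs_mult, (Rabs_right (2 * L2)) by lra. nra.
Qed.

Lemma concat_path_injective :
  (forall s u, 0 <= s <= L1 -> 0 <= u <= L2 -> g1 s = g2 u -> s = L1) ->
  forall s s', in01 s -> in01 s' -> concat_path s = concat_path s' -> s = s'.
Proof.
  destruct G1 as [_ [A0 [A1 HA]]], G2 as [_ [B0 [B1 HB]]]. intros Hdis.
  assert (Hcross : forall s s', 0 <= s <= 1/2 -> 1/2 < s' <= 1 -> g1 (2 * s * L1) <> g2 ((2 * s' - 1) * L2)).
  { intros r r' Hr Hr' E. pose proof E as E'. apply Hdis in E'; [|nra|nra].
    rewrite E', A1, <- B0 in E.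
    assert (E0 : D (g2 0) (g2 ((2 * r' - 1) * L2)) = 0) by (rewrite E; apply metric_refl).
    rewrite HB in E0 by nra. destruct_abs; nra. }
  intros s s' Hs Hs'. unfold in01, concat_path in *.
  destruct (Rle_dec s (1/2)); destruct (Rle_dec s' (1/2)); intros E.
  - assert (E0 : D (g1 (2 * s * L1)) (g1 (2 * s' * L1)) = 0) by (rewrite E; apply metric_refl).
    rewrite HA in E0 by nra. destruct_abs; nra.
  - exfalso. exact (Hcross s s' ltac:(lra) ltac:(lra) E).
  - exfalso. exact (Hcross s' s ltac:(lra) ltac:(lra) (eq_sym E)).
  - assert (E0 : D (g2 ((2 * s - 1) * L2)) (g2 ((2 * s' - 1) * L2)) = 0) by (rewrite E; apply metric_refl).
    rewrite HB in E0 by nra. destruct_abs; nra.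
Qed.

Lemma concat_path_image x :
  (exists s, 0 <= s <= L1 /\ g1 s = x) \/ (exists u, 0 <= u <= L2 /\ g2 u = x) <->
  exists s, in01 s /\ concat_path s = x.
Proof.
  destruct G1 as [_ [A0 [A1 HA]]], G2 as [_ [B0 [B1 HB]]]. unfold in01, concat_path. split.
  - intros [[s [Hs E]]|[u [Hu E]]].
    + exists (s / (2 * L1)).
      assert (0 <= s / (2 * L1) <= 1/2).
      { split; [apply Rle_mult_inv_pos; lra|]. apply (Rmult_le_reg_r (2 * L1)); [lra|].
        field_simplify; lra. }
      split; [lra|]. destruct (Rle_dec (s / (2 * L1)) (1/2)); [|lra].
      replace (2 * (s / (2 * L1)) * L1) with s by (field; lra). exact E.
    + destruct (Req_dec u 0) as [->|Hu0].
      * rewrite B0 in E. subst x. exists (1/2). split; [lra|].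
        destruct (Rle_dec (1/2) (1/2)); [|lra]. replace (2 * (1/2) * L1) with L1 by field. exact A1.
      * exists ((u / L2 + 1) / 2).
        assert (0 < u / L2 <= 1).
        { split; [apply Rdiv_lt_0_compat; lra|]. apply (Rmult_le_reg_r L2); [lra|].
          field_simplify; lra. }
        split; [lra|]. destruct (Rle_dec ((u / L2 + 1) / 2) (1/2)); [lra|].
        replace ((2 * ((u / L2 + 1) / 2) - 1) * L2) with u by (field; lra). exact E.
  - intros [s [Hs E]]. destruct (Rle_dec s (1/2)).
    + left. exists (2 * s * L1). split; [nra|exact E].
    + right. exists ((2 * s - 1) * L2). split; [nra|exact E].
Qed.

Lemma geodesic_concat_arc :
  (forall s u, 0 <= s <= L1 -> 0 <= u <= L2 -> g1 s = g2 u -> s = L1) ->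
  is_arc D a b (fun x => (exists s, 0 <= s <= L1 /\ g1 s = x) \/ (exists u, 0 <= u <= L2 /\ g2 u = x)).
Proof.
  intros Hdis. destruct G1 as [_ [A0 _]], G2 as [_ [_ [B1 _]]].
  exists concat_path. unfold concat_path at 1 2.
  split; [destruct (Rle_dec 0 (1/2)); [|lra]; rewrite Rmult_0_r, Rmult_0_l; exact A0|].
  split; [destruct (Rle_dec 1 (1/2)); [lra|]; replace ((2 * 1 - 1) * L2) with L2 by ring; exact B1|].
  split; [exact concat_path_continuous|]. split; [exact (concat_path_injective Hdis)|].
  exact concat_path_image.
Qed.

End Concatenation.

End MetricSpace.

(** * Geometry of an R-tree *)

Section RTree.
Context {X : Type} {d : X -> X -> R} (HT : is_R_tree d).

Let HM : is_metric d := proj1 HT.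

Lemma R_tree_geodesic a b : exists sg, is_geodesic d sg a b (d a b).
Proof.
  destruct (classic (a = b)) as [<-|Hab].
  - exists (fun _ => a). rewrite (metric_refl HM). split; [lra|]. split; [reflexivity|]. split; [reflexivity|].
    intros s t Hs Ht. rewrite (metric_refl HM). replace s with 0 by lra. replace t with 0 by lra.
    rewrite Rminus_0_r, Rabs_R0; reflexivity.
  - destruct (proj2 HT a b Hab) as [A [_ [[sg [H0 [H1 [H _]]]] _]]].
    exists sg. split; [apply (metric_ge0 HM)|]. tauto.
Qed.

Lemma R_tree_arc_on_geodesic a b sg B :
  is_geodesic d sg a b (d a b) -> is_arc d a b B -> a <> b ->
  forall x, B x -> exists s, 0 <= s <= d a b /\ sg s = x.
Proof.
  intros Hg HB Hab x Bx.
  pose proof (geodesic_arc HM sg a b _ Hg (metric_pos HM a b Hab)) as Hsg.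
  destruct (proj2 HT a b Hab) as [A [_ [_ Huniq]]].
  apply (Huniq _ Hsg), (Huniq _ HB), Bx.
Qed.

(* The concatenation is an arc, hence lies on the geodesic from [a] to [b]. *)
Lemma R_tree_concat_between g1 g2 a c b L1 L2 :
  is_geodesic d g1 a c L1 -> is_geodesic d g2 c b L2 -> 0 < L1 -> 0 < L2 ->
  (forall s u, 0 <= s <= L1 -> 0 <= u <= L2 -> g1 s = g2 u -> s = L1) ->
  between d a c b.
Proof.
  intros H1 H2 HL1 HL2 Hdis.
  assert (Hab : a <> b).
  { intros E. pose proof H1 as [_ [A0 _]]. pose proof H2 as [_ [_ [B1 _]]].
    assert (E' : g1 0 = g2 L2) by congruence. apply Hdis in E'; lra. }
  pose proof (geodesic_concat_arc HM g1 g2 a c b L1 L2 H1 H2 HL1 HL2 Hdis) as HB.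
  destruct (R_tree_geodesic a b) as [sg Hg].
  destruct (R_tree_arc_on_geodesic a b sg _ Hg HB Hab c) as [s [Hs <-]].
  { left. exists L1. split; [lra|]. apply H1. }
  exact (geodesic_between _ _ _ _ _ _ Hg Hs).
Qed.

Lemma R_tree_between_on_geodesic a b z sg :
  is_geodesic d sg a b (d a b) -> between d a z b -> z = sg (d a z).
Proof.
  intros Hg Hz. pose proof Hg as [_ [H0 [H1 H]]].
  destruct (classic (z = a)) as [->|Hza]; [rewrite (metric_refl HM); auto|].
  destruct (classic (z = b)) as [->|Hzb]; [rewrite H1; reflexivity|].
  assert (La : 0 < d a z) by (apply (metric_pos HM); auto).
  assert (Lb : 0 < d z b) by (apply (metric_pos HM); auto).
  destruct (R_tree_geodesic a z) as [g1 G1]. destruct (R_tree_geodesic z b) as [g2 G2].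
  assert (Hab : a <> b).
  { intros ->. unfold between in Hz. rewrite (metric_refl HM), (metric_sym HM z b) in Hz. lra. }
  assert (Hdis : forall s u, 0 <= s <= d a z -> 0 <= u <= d z b -> g1 s = g2 u -> s = d a z).
  { intros s u Hs Hu E.
    destruct (geodesic_point _ _ _ _ _ _ G1 Hs) as [E1 _].
    destruct (geodesic_point _ _ _ _ _ _ G2 Hu) as [_ E2].
    unfold between in Hz. rewrite E in E1.
    pose proof (metric_triangle HM a (g2 u) b). lra. }
  pose proof (geodesic_concat_arc HM g1 g2 a z b _ _ G1 G2 La Lb Hdis) as HB.
  destruct (R_tree_arc_on_geodesic a b sg _ Hg HB Hab z) as [s [Hs E]].
  { left. exists (d a z). split; [lra|]. apply G1. }
  rewrite <- E. now rewrite (proj1 (geodesic_point _ _ _ _ _ _ Hg Hs)).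
Qed.

(* The center is the first point of [x, y] lying between [y] and [z]. *)
Lemma R_tree_tripod x y z : exists c, between d x c y /\ between d x c z /\ between d y c z.
Proof.
  destruct (R_tree_geodesic x y) as [g1 G1]. pose proof G1 as [HL1 [A0 [A1 HA]]].
  set (phi := fun s => d y (g1 s) + d (g1 s) z - d y z).
  assert (Hc : continuous_on R_dist phi 0 (d x y)).
  { apply (lipschitz_continuous_on _ _ _ _ 2); [lra|]. intros s s' Hs Hs'. unfold R_dist, phi.
    assert (E : d (g1 s) (g1 s') = Rabs (s - s')) by (apply HA; lra).
    pose proof (metric_triangle HM y (g1 s) (g1 s')). pose proof (metric_triangle HM y (g1 s') (g1 s)).
    pose proof (metric_triangle HM (g1 s) (g1 s') z). pose proof (metric_triangle HM (g1 s') (g1 s) z).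
    rewrite (metric_sym HM (g1 s') (g1 s)) in *. destruct_abs; lra. }
  assert (Hv : phi (d x y) = 0) by (unfold phi; rewrite A1, (metric_refl HM); ring).
  destruct (continuous_least_zero phi 0 (d x y) HL1 Hc Hv) as [s0 [Hs0 [Hp0 Hfirst]]].
  set (c := g1 s0).
  assert (Bc : between d y c z) by (unfold between, phi in *; unfold c; lra).
  pose proof (geodesic_between _ _ _ _ _ _ G1 Hs0) as Bxy.
  exists c. split; [exact Bxy|]. split; [|exact Bc].
  destruct (Req_dec s0 0) as [E0|N0].
  { unfold c in *. rewrite E0, A0 in *. unfold between. rewrite (metric_refl HM). ring. }
  destruct (classic (c = z)) as [Ecz|Ncz].
  { unfold between. rewrite Ecz, (metric_refl HM). ring. }
  destruct (R_tree_geodesic c z) as [g2 G2].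
  apply (R_tree_concat_between g1 g2 x c z s0 (d c z)).
  - exact (geodesic_restrict _ _ _ _ _ _ G1 Hs0).
  - exact G2.
  - lra.
  - exact (metric_pos HM c z Ncz).
  - intros s u Hs Hu E.
    pose proof (geodesic_between _ _ _ _ _ _ G2 Hu) as B2.
    assert (Hz : phi s = 0).
    { unfold phi. rewrite E. unfold between in B2, Bc. pose proof (metric_triangle HM y c (g2 u)).
      pose proof (metric_triangle HM y (g2 u) z). lra. }
    apply Hfirst in Hz; lra.
Qed.

Variable x0 : X.

Local Notation gp := (gromov d x0).

Definition ray (w : X) : R -> X :=
  proj1_sig (constructive_indefinite_description _ (R_tree_geodesic x0 w)).

Lemma ray_geodesic w : is_geodesic d (ray w) x0 w (d x0 w).
Proof. unfold ray. destruct (constructive_indefinite_description _ _); assumption. Qed.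

Lemma dist_base_ray w s : 0 <= s <= d x0 w -> d x0 (ray w s) = s.
Proof. intros Hs. apply (geodesic_point _ _ _ _ _ _ (ray_geodesic w) Hs). Qed.

Lemma dist_ray w s : 0 <= s <= d x0 w -> d (ray w s) w = d x0 w - s.
Proof. intros Hs. apply (geodesic_point _ _ _ _ _ _ (ray_geodesic w) Hs). Qed.

(* The tripod center [c] of [x0, x, y] lies at distance [gp x y] from [x0] on both rays. *)
Lemma ray_agree x y t : 0 <= t <= gp x y -> ray x t = ray y t.
Proof.
  intros Ht. destruct (R_tree_tripod x0 x y) as [c [B1 [B2 B3]]].
  assert (Ec : d x0 c = gp x y) by (pose proof (metric_sym HM c x); unfold between, gromov in *; lra).
  pose proof (gromov_le_l HM x0 x y). pose proof (gromov_le_r HM x0 x y).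
  assert (Hc : c = ray x (d x0 c)) by exact (R_tree_between_on_geodesic _ _ _ _ (ray_geodesic x) B1).
  set (p := ray x t).
  assert (E1 : d x0 p = t) by (apply dist_base_ray; lra).
  assert (E2 : d p c = gp x y - t).
  { rewrite Hc, Ec. unfold p. destruct (ray_geodesic x) as [_ [_ [_ H']]]. rewrite H' by lra.
    destruct_abs; lra. }
  assert (Bp : between d x0 p y).
  { unfold between. pose proof (metric_triangle HM x0 p y). pose proof (metric_triangle HM p c y).
    unfold between in *. lra. }
  rewrite (R_tree_between_on_geodesic _ _ _ _ (ray_geodesic y) Bp), E1. reflexivity.
Qed.

Lemma R_tree_gromov_ultra x y z : Rmin (gp x y) (gp y z) <= gp x z.
Proof.
  set (t := Rmin (gp x y) (gp y z)).
  assert (H1 : t <= gp x y) by apply Rmin_l. assert (H2 : t <= gp y z) by apply Rmin_r.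
  assert (H0 : 0 <= t) by (apply Rmin_glb; apply (gromov_ge0 HM)).
  pose proof (gromov_le_l HM x0 x y). pose proof (gromov_le_r HM x0 y z).
  assert (E1 : ray x t = ray y t) by (apply ray_agree; lra).
  assert (E2 : ray y t = ray z t) by (apply ray_agree; lra).
  pose proof (metric_triangle HM x (ray x t) z) as Htr.
  rewrite (metric_sym HM x (ray x t)), dist_ray in Htr by lra. rewrite E1, E2, dist_ray in Htr by lra.
  rewrite (dist_gromov d x0) in Htr. lra.
Qed.

Lemma gromov_ray x y s : 0 <= s <= d x0 x -> gp (ray x s) y = Rmin s (gp x y).
Proof.
  intros Hs. pose proof (dist_ray x s Hs) as Ed. pose proof (dist_base_ray x s Hs) as Ev.
  assert (Evx : gp (ray x s) x = s) by (unfold gromov in *; lra).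
  pose proof (R_tree_gromov_ultra (ray x s) x y). pose proof (R_tree_gromov_ultra x (ray x s) y).
  rewrite (gromov_sym HM) in H0. rewrite Evx in *.
  pose proof (gromov_le_l HM x0 (ray x s) y). rewrite Ev in H1.
  destruct_min_max; lra.
Qed.

End RTree.

(** * Geodesic 0-hyperbolic spaces are R-trees *)

Section FourPoint.
Context {P : Type} {D : P -> P -> R} (HD : is_metric D) (H4 : four_point D).
Hypothesis geodesic_ex : forall a b, exists sg, is_geodesic D sg a b (D a b).

Lemma four_point_gromov_ultra a x z w : Rmin (gromov D a x z) (gromov D a z w) <= gromov D a x w.
Proof.
  pose proof (H4 x w a z). unfold gromov.
  rewrite (metric_sym HD x a), (metric_sym HD w z), (metric_sym HD w a) in H. destruct_min_max; lra.
Qed.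

Lemma between_of_closer a x z w : between D a x z -> D w z < D x z -> between D a x w.
Proof.
  unfold between. intros Hb Hlt. pose proof (four_point_gromov_ultra a x z w) as H. unfold gromov in H.
  pose proof (metric_triangle HD a w z). pose proof (metric_triangle HD a x w).
  rewrite (metric_sym HD z w) in H. destruct_min_max; lra.
Qed.

(* At the first time [s0] where [x] lies between [a] and [g s0], continuity and
   [between_of_closer] force [g s0 = x]. *)
Lemma path_hits_between g u v a x :
  u <= v -> continuous_on D g u v -> g u = a -> between D a x (g v) ->
  exists s, u <= s <= v /\ g s = x.
Proof.
  intros Huv Hc Ha Hb.
  set (phi := fun s => D a x + D x (g s) - D a (g s)).
  assert (Hpc : continuous_on R_dist phi u v).
  { intros s Hs eps He. destruct (Hc s Hs (eps / 2)) as [dl [Hdl Hd]]; [lra|].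
    exists dl. split; [exact Hdl|]. intros s' Hs' Hss. specialize (Hd s' Hs' Hss).
    unfold R_dist, phi. pose proof (metric_triangle HD x (g s) (g s')).
    pose proof (metric_triangle HD x (g s') (g s)). pose proof (metric_triangle HD a (g s) (g s')).
    pose proof (metric_triangle HD a (g s') (g s)).
    rewrite (metric_sym HD (g s') (g s)) in *. destruct_abs; lra. }
  assert (Hv : phi v = 0) by (unfold phi, between in *; lra).
  destruct (continuous_least_zero phi u v Huv Hpc Hv) as [s0 [Hs0 [Hp0 Hfirst]]].
  exists s0. split; [exact Hs0|].
  destruct (classic (g s0 = x)) as [E|NE]; [exact E|exfalso].
  assert (Hr : 0 < D x (g s0)) by (apply (metric_pos HD); auto).
  destruct (Req_dec s0 u) as [Eu|Nu].
  { unfold phi in Hp0. rewrite Eu, Ha, (metric_refl HD), (metric_sym HD x a) in Hp0.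
    apply NE. rewrite Eu, Ha. apply (metric_eq0 HD). lra. }
  destruct (Hc s0 Hs0 _ Hr) as [dl [Hdl Hd]].
  set (s' := Rmax u (s0 - dl / 2)).
  assert (Hs' : u <= s' <= v /\ s' < s0 /\ Rabs (s0 - s') < dl)
    by (unfold s'; destruct_min_max; destruct_abs; lra).
  destruct Hs' as [Hs'1 [Hs'2 Hs'3]].
  specialize (Hd s' Hs'1 Hs'3).
  assert (Hz : phi s' = 0).
  { unfold phi in *. rewrite (metric_sym HD (g s0) (g s')) in Hd.
    pose proof (between_of_closer a x (g s0) (g s')). unfold between in *. lra. }
  apply Hfirst in Hz; lra.
Qed.

Lemma path_hits_between_rev g u v b x :
  u <= v -> continuous_on D g u v -> g v = b -> between D b x (g u) ->
  exists s, u <= s <= v /\ g s = x.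
Proof.
  intros Huv Hc Hb Hbt.
  destruct (path_hits_between (fun s => g (- s)) (- v) (- u) b x) as [s [Hs E]].
  - lra.
  - apply continuous_on_reverse, Hc.
  - rewrite Ropp_involutive. exact Hb.
  - rewrite Ropp_involutive. exact Hbt.
  - exists (- s). split; [lra|exact E].
Qed.

Lemma geodesic_projection_between a b sg x :
  is_geodesic D sg a b (D a b) ->
  let c := sg (gromov D a x b) in between D a c x /\ between D b c x.
Proof.
  intros Hg c. unfold between.
  assert (Ht : 0 <= gromov D a x b <= D a b) by (split; [apply (gromov_ge0 HD)|apply (gromov_le_r HD)]).
  destruct (geodesic_point _ _ _ _ _ _ Hg Ht) as [Ec1 Ec2]. fold c in Ec1, Ec2.
  pose proof (four_point_gromov_ultra a c b x) as U1. pose proof (four_point_gromov_ultra b c a x) as U2.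
  pose proof (metric_triangle HD a c x). pose proof (metric_triangle HD a x c).
  pose proof (metric_triangle HD b c x). pose proof (metric_triangle HD b x c).
  unfold gromov in *.
  rewrite (metric_sym HD x c), (metric_sym HD b c), (metric_sym HD b a), (metric_sym HD c a),
    (metric_sym HD b x) in *.
  split; destruct_min_max; lra.
Qed.

(* Otherwise the arc would pass through the projection [c] of [x] both before and after [x]. *)
Lemma arc_on_geodesic a b sg B :
  is_geodesic D sg a b (D a b) -> is_arc D a b B ->
  forall x, B x -> exists s, 0 <= s <= D a b /\ sg s = x.
Proof.
  intros Hg [g [G0 [G1 [Gc [Gi Gim]]]]] x Bx.
  apply Gim in Bx. destruct Bx as [s0 [Hs0 Ex]]. unfold in01 in Hs0.
  destruct (geodesic_projection_between a b sg x Hg) as [Bac Bbc].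
  set (c := sg (gromov D a x b)) in *.
  destruct (classic (x = c)) as [Exc|Nxc].
  { exists (gromov D a x b). split; [split; [apply (gromov_ge0 HD)|apply (gromov_le_r HD)]|].
    symmetry; exact Exc. }
  exfalso.
  destruct (path_hits_between g 0 s0 a c ltac:(lra)) as [s1 [Hs1 E1]].
  { exact (continuous_on_sub D g 0 1 0 s0 ltac:(lra) ltac:(lra) Gc). }
  { exact G0. } { rewrite Ex. exact Bac. }
  destruct (path_hits_between_rev g s0 1 b c ltac:(lra)) as [s2 [Hs2 E2]].
  { exact (continuous_on_sub D g 0 1 s0 1 ltac:(lra) ltac:(lra) Gc). }
  { exact G1. } { rewrite Ex. exact Bbc. }
  assert (s1 <> s0) by (intros ->; apply Nxc; rewrite <- Ex; exact E1).
  assert (s2 <> s0) by (intros ->; apply Nxc; rewrite <- Ex; exact E2).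
  assert (s1 = s2) by (apply Gi; unfold in01; [lra|lra|congruence]).
  lra.
Qed.

Lemma geodesic_on_arc a b sg B :
  is_geodesic D sg a b (D a b) -> is_arc D a b B ->
  forall s, 0 <= s <= D a b -> B (sg s).
Proof.
  intros Hg [g [G0 [G1 [Gc [_ Gim]]]]] s Hs. apply Gim.
  destruct (path_hits_between g 0 1 a (sg s) ltac:(lra) Gc G0) as [s' [Hs' E]].
  { rewrite G1. exact (geodesic_between _ _ _ _ _ _ Hg Hs). }
  exists s'. split; [exact Hs'|exact E].
Qed.

Theorem geodesic_four_point_R_tree : is_R_tree D.
Proof.
  split; [exact HD|]. intros a b Hab.
  destruct (geodesic_ex a b) as [sg Hg].
  exists (fun x => exists s, 0 <= s <= D a b /\ sg s = x).
  split; [exact (geodesic_arc HD sg a b _ Hg (metric_pos HD a b Hab))|].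
  split; [destruct Hg as (_ & H0 & H1 & Hiso); exists sg; tauto|].
  intros B HB x. split.
  - exact (arc_on_geodesic a b sg B Hg HB x).
  - intros [s [Hs <-]]. exact (geodesic_on_arc a b sg B Hg HB s Hs).
Qed.

End FourPoint.

(** * Rooted trees given by heights and meet heights *)

Lemma ultra_four_point (xy xz xw yz yw zw : R) :
  Rmin xy yz <= xz -> Rmin xz yz <= xy -> Rmin xy xz <= yz ->
  Rmin xy yw <= xw -> Rmin xw yw <= xy -> Rmin xy xw <= yw ->
  Rmin xz zw <= xw -> Rmin xw zw <= xz -> Rmin xz xw <= zw ->
  Rmin yz zw <= yw -> Rmin yw zw <= yz -> Rmin yz yw <= zw ->
  Rmin (xz + yw) (xw + yz) <= xy + zw.
Proof. intros. destruct_min_max; lra. Qed.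

(* [h p] is the height of [p] above the root, [m p q] the height at which the
   branches through [p] and [q] separate and [anc p t] the point of height [t] below [p]. *)
Record is_height_tree {P : Type} (h : P -> R) (m : P -> P -> R) (anc : P -> R -> P) : Prop := {
  tree_height_ge0 : forall p, 0 <= h p;
  tree_meet_ge0 : forall p q, 0 <= m p q;
  tree_meet_sym : forall p q, m p q = m q p;
  tree_meet_le : forall p q, m p q <= h p;
  tree_meet_self : forall p, m p p = h p;
  tree_meet_ultra : forall p q r, Rmin (m p r) (m r q) <= m p q;
  tree_eq_of_meet : forall p q, h p = h q -> m p q = h p -> p = q;
  tree_height_anc : forall p t, 0 <= t <= h p -> h (anc p t) = t;
  tree_meet_anc : forall p t q, 0 <= t <= h p -> m (anc p t) q = Rmin t (m p q)
}.

Definition tree_dist {P : Type} (h : P -> R) (m : P -> P -> R) (p q : P) : R := h p + h q - 2 * m p q.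

Section HeightTree.
Context {P : Type} {h : P -> R} {m : P -> P -> R} {anc : P -> R -> P} (HH : is_height_tree h m anc).

Let height_ge0 := tree_height_ge0 _ _ _ HH.
Let meet_ge0 := tree_meet_ge0 _ _ _ HH.
Let meet_sym := tree_meet_sym _ _ _ HH.
Let meet_le := tree_meet_le _ _ _ HH.
Let meet_self := tree_meet_self _ _ _ HH.
Let meet_ultra := tree_meet_ultra _ _ _ HH.
Let eq_of_meet := tree_eq_of_meet _ _ _ HH.
Let height_anc := tree_height_anc _ _ _ HH.
Let meet_anc := tree_meet_anc _ _ _ HH.

Lemma meet_le_r p q : m p q <= h q.
Proof. rewrite meet_sym. apply meet_le. Qed.

Lemma tree_dist_metric : is_metric (tree_dist h m).
Proof.
  unfold tree_dist. split; [|split; [|split]].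
  - intros x y. pose proof (meet_le x y). pose proof (meet_le_r x y). lra.
  - intros x y. split.
    + intros E. pose proof (meet_le x y). pose proof (meet_le_r x y). apply eq_of_meet; lra.
    + intros ->. rewrite meet_self. ring.
  - intros x y. rewrite meet_sym. ring.
  - intros x y z. pose proof (meet_ultra x z y). pose proof (meet_le_r x y). pose proof (meet_le y z).
    destruct_min_max; lra.
Qed.

Lemma tree_dist_four_point : four_point (tree_dist h m).
Proof.
  intros x y z w. unfold tree_dist.
  assert (U1 : forall a b c, Rmin (m a b) (m b c) <= m a c) by (intros; apply meet_ultra).
  assert (U2 : forall a b c, Rmin (m a b) (m a c) <= m b c)
    by (intros; rewrite (meet_sym a b); apply meet_ultra).
  assert (U3 : forall a b c, Rmin (m a c) (m b c) <= m a b)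
    by (intros; rewrite (meet_sym b c); apply meet_ultra).
  pose proof (ultra_four_point (m x y) (m x z) (m x w) (m y z) (m y w) (m z w)
    (U1 _ _ _) (U3 _ _ _) (U2 _ _ _) (U1 _ _ _) (U3 _ _ _) (U2 _ _ _)
    (U1 _ _ _) (U3 _ _ _) (U2 _ _ _) (U1 _ _ _) (U3 _ _ _) (U2 _ _ _)).
  destruct_min_max; lra.
Qed.

Lemma anc_agree p q t : 0 <= t <= h p -> 0 <= t <= h q -> t <= m p q -> anc p t = anc q t.
Proof.
  intros Hp Hq Hm. apply eq_of_meet; [rewrite !height_anc by lra; reflexivity|].
  rewrite meet_anc, meet_sym, meet_anc, height_anc, meet_sym by lra. destruct_min_max; lra.
Qed.

Lemma anc_of_meet p q : h p <= h q -> m q p = h p -> anc q (h p) = p.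
Proof.
  intros Hpq Hm. pose proof (height_ge0 p). apply eq_of_meet; rewrite height_anc by lra; [reflexivity|].
  rewrite meet_anc, Hm by lra. destruct_min_max; lra.
Qed.

Lemma anc_height p : anc p (h p) = p.
Proof. apply anc_of_meet; [lra|apply meet_self]. Qed.

Lemma anc_anc p s t : 0 <= t <= s -> s <= h p -> anc (anc p s) t = anc p t.
Proof.
  intros Ht Hs. apply anc_agree; rewrite ?height_anc by lra; try lra.
  rewrite meet_anc, meet_self by lra. destruct_min_max; lra.
Qed.

Lemma tree_dist_anc p a b : 0 <= a <= h p -> 0 <= b <= h p -> tree_dist h m (anc p a) (anc p b) = Rabs (a - b).
Proof.
  intros Ha Hb. unfold tree_dist. rewrite !height_anc by lra. rewrite meet_anc by lra.
  rewrite meet_sym, meet_anc by lra. rewrite meet_self. destruct_min_max; destruct_abs; lra.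
Qed.

(* Descend from [p] to the meet height [m p q], then climb to [q]. *)
Lemma tree_dist_geodesic p q : exists sg, is_geodesic (tree_dist h m) sg p q (tree_dist h m p q).
Proof.
  set (M := m p q).
  assert (HM0 : 0 <= M) by apply meet_ge0.
  assert (HMp : M <= h p) by apply meet_le. assert (HMq : M <= h q) by apply meet_le_r.
  exists (fun s => if Rle_dec s (h p - M) then anc p (h p - s) else anc q (s - h p + 2 * M)).
  assert (EL : tree_dist h m p q = h p + h q - 2 * M) by reflexivity.
  assert (Hpq : forall a b, M <= a <= h p -> M <= b <= h q -> tree_dist h m (anc p a) (anc q b) = a + b - 2 * M).
  { intros a b Ha Hb. unfold tree_dist. rewrite !height_anc by lra. rewrite meet_anc by lra.
    rewrite meet_sym, meet_anc by lra. rewrite meet_sym. fold M. destruct_min_max; lra. }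
  split; [|split; [|split]].
  - apply tree_dist_metric.
  - destruct (Rle_dec 0 (h p - M)); [|lra]. rewrite Rminus_0_r. apply anc_height.
  - rewrite EL. destruct (Rle_dec (h p + h q - 2 * M) (h p - M)).
    + apply eq_of_meet; rewrite ?height_anc by lra; [lra|]. rewrite meet_anc by lra. fold M.
      destruct_min_max; lra.
    + replace (h p + h q - 2 * M - h p + 2 * M) with (h q) by ring. apply anc_height.
  - intros s t Hs Ht. rewrite EL in Hs, Ht.
    destruct (Rle_dec s (h p - M)); destruct (Rle_dec t (h p - M)).
    + rewrite tree_dist_anc by lra. destruct_abs; lra.
    + rewrite Hpq by lra. destruct_abs; lra.
    + rewrite (metric_sym tree_dist_metric), Hpq by lra. destruct_abs; lra.
    + rewrite tree_dist_anc by lra. destruct_abs; lra.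
Qed.

Theorem tree_dist_R_tree : is_R_tree (tree_dist h m).
Proof.
  exact (geodesic_four_point_R_tree tree_dist_metric tree_dist_four_point tree_dist_geodesic).
Qed.

End HeightTree.

Definition is_int (r : R) : Prop := exists z : Z, r = IZR z.

Definition floor (r : R) : R := IZR (Int_part r).

Lemma floor_spec r : floor r <= r < floor r + 1.
Proof. unfold floor. pose proof (base_Int_part r). lra. Qed.

Lemma is_int_floor r : is_int (floor r).
Proof. eexists; reflexivity. Qed.

Lemma is_int_0 : is_int 0.
Proof. exists 0%Z; reflexivity. Qed.

Lemma is_int_1 : is_int 1.
Proof. exists 1%Z; reflexivity. Qed.

Lemma is_int_add a b : is_int a -> is_int b -> is_int (a + b).
Proof. intros [za ->] [zb ->]. exists (za + zb)%Z. symmetry; apply plus_IZR. Qed.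

Lemma is_int_sub a b : is_int a -> is_int b -> is_int (a - b).
Proof. intros [za ->] [zb ->]. exists (za - zb)%Z. symmetry; apply minus_IZR. Qed.

Lemma is_int_INR n : is_int (INR n).
Proof. exists (Z.of_nat n). apply INR_IZR_INZ. Qed.

Lemma int_lt_le a b : is_int a -> is_int b -> a < b -> a + 1 <= b.
Proof.
  intros [za ->] [zb ->] Hlt. apply lt_IZR in Hlt. rewrite <- plus_IZR. apply IZR_le. lia.
Qed.

Lemma int_eq_close a b : is_int a -> is_int b -> a < b + 1 -> b < a + 1 -> a = b.
Proof.
  intros Ha Hb H1 H2. destruct (Rtotal_order a b) as [Hab|[E|Hba]]; [|exact E|].
  - pose proof (int_lt_le a b Ha Hb Hab). lra.
  - pose proof (int_lt_le b a Hb Ha Hba). lra.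
Qed.

Lemma floor_int n : is_int n -> floor n = n.
Proof. intros Hn. pose proof (floor_spec n). apply int_eq_close; [apply is_int_floor|exact Hn|lra|lra]. Qed.

Lemma floor_le r s : r <= s -> floor r <= floor s.
Proof.
  intros H. destruct (Rle_dec (floor r) (floor s)) as [?|Hn]; [assumption|].
  pose proof (int_lt_le (floor s) (floor r) (is_int_floor s) (is_int_floor r) ltac:(lra)).
  pose proof (floor_spec r). pose proof (floor_spec s). lra.
Qed.

Lemma int_le_floor n r : is_int n -> n <= r -> n <= floor r.
Proof. intros Hn H. rewrite <- (floor_int n Hn). apply floor_le, H. Qed.

Lemma floor_min a b : floor (Rmin a b) = Rmin (floor a) (floor b).
Proof.
  destruct (Rmin_cases a b) as [[H E]|[H E]]; rewrite E.
  - pose proof (floor_le a b H). destruct_min_max; lra.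
  - pose proof (floor_le b a ltac:(lra)). destruct_min_max; lra.
Qed.

Lemma floor_min_int n r : is_int n -> floor (Rmin n r) = Rmin n (floor r).
Proof. intros Hn. rewrite floor_min, floor_int by exact Hn. reflexivity. Qed.

Lemma not_is_int_add_frac n t : is_int n -> 0 < t < 1 -> ~ is_int (n + t).
Proof.
  intros Hn Ht Hi.
  assert (Hti : is_int t) by (replace t with (n + t - n) by ring; apply is_int_sub; assumption).
  pose proof (int_lt_le 0 t is_int_0 Hti). pose proof (int_lt_le t 1 Hti is_int_1). lra.
Qed.

Section Chains.
Context {V E : Type} (src tgt : E -> V).

Lemma chain_eq_len p q L L' : chain src tgt p q L -> L = L' -> chain src tgt p q L'.
Proof. intros H <-. exact H. Qed.

Lemma chain_app p r q L1 L2 :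
  chain src tgt p r L1 -> chain src tgt r q L2 -> chain src tgt p q (L1 + L2).
Proof.
  intros H1. revert q L2. induction H1 as [p|p r' q' c L Hs Hc IH]; intros q L2 H2.
  - eapply chain_eq_len; [exact H2|ring].
  - eapply chain_eq_len; [apply (chain_cons _ _ p r' q c (L + L2) Hs (IH _ _ H2))|ring].
Qed.

Lemma chain_step p q c : edge_step src tgt p q c -> chain src tgt p q c.
Proof. intros Hs. eapply chain_eq_len; [apply (chain_cons _ _ _ q _ c 0 Hs), chain_nil|ring]. Qed.

Lemma edge_step_sym p r c : edge_step src tgt p r c -> edge_step src tgt r p c.
Proof.
  intros (e & s & t & H1 & H2 & ->). exists e, t, s.
  split; [exact H2|]. split; [exact H1|]. apply Rabs_minus_sym.
Qed.

Lemma chain_rev p q L : chain src tgt p q L -> chain src tgt q p L.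
Proof.
  induction 1 as [p|p r q c L Hs Hc IH]; [apply chain_nil|].
  rewrite Rplus_comm. exact (chain_app _ _ _ _ _ IH (chain_step _ _ _ (edge_step_sym _ _ _ Hs))).
Qed.

Lemma chain_len_ge (D : real_pt V E -> real_pt V E -> R) p q L :
  is_metric D -> (forall p r c, edge_step src tgt p r c -> D p r = c) ->
  chain src tgt p q L -> D p q <= L.
Proof.
  intros HD Hstep. induction 1 as [p|p r q c L Hs Hc IH].
  - rewrite (metric_refl HD). lra.
  - pose proof (metric_triangle HD p r q). rewrite (Hstep _ _ _ Hs) in H. lra.
Qed.

End Chains.

(** * The simplicial tree of an R-tree *)

Section SimplicialTree.
Context {X : Type} (d : X -> X -> R) (HT : is_R_tree d) (x0 : X).

Let HM : is_metric d := proj1 HT.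
Local Notation rho := (d x0).
Local Notation gp := (gromov d x0).
Local Notation ray := (ray HT x0).

Definition vertex : Type := {z : X | is_int (rho z)}.

(* The edge indexed by [z] joins [z] to the point of [x0, z] one unit closer to [x0]. *)
Definition edge : Type := {z : X | is_int (rho z) /\ 1 <= rho z}.

Definition point : Type := real_pt vertex edge.

Lemma is_int_rho_base : is_int (rho x0).
Proof. rewrite (metric_refl HM). apply is_int_0. Qed.

Definition root : vertex := exist _ x0 is_int_rho_base.

(* [root] is a junk value: [vertex_of] is only applied to points at integer distance. *)
Definition vertex_of (z : X) : vertex :=
  match excluded_middle_informative (is_int (rho z)) with
  | left H => exist _ z H
  | right _ => root
  end.

Definition edge_src (e : edge) : vertex := vertex_of (ray (proj1_sig e) (rho (proj1_sig e) - 1)).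
Definition edge_tgt (e : edge) : vertex := exist _ (proj1_sig e) (proj1 (proj2_sig e)).

(* The upper end of the closed cell containing [p]. *)
Definition top (p : point) : X :=
  match p with RV v => proj1_sig v | RE e _ => proj1_sig e end.

Definition height (p : point) : R :=
  match p with RV v => rho (proj1_sig v) | RE e t => rho (proj1_sig e) - 1 + proj1_sig t end.

Definition int_gromov (x y : X) : R := floor (gp x y).

Definition meet (p q : point) : R := Rmin (Rmin (height p) (height q)) (int_gromov (top p) (top q)).

Lemma frac_part_bounds t : floor t <> t -> 0 < t - floor t < 1.
Proof. intros Hn. pose proof (floor_spec t) as [[H1|H1] H2]; [lra|contradiction]. Qed.

(* A non-integer height [t] lies inside the edge whose upper end is at height [floor t + 1];
   the fallback [RV root] is never reached. *)
Definition ancestor (p : point) (t : R) : point :=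
  match Req_dec_T (floor t) t with
  | left _ => RV (vertex_of (ray (top p) t))
  | right Hn =>
    let z := ray (top p) (floor t + 1) in
    match excluded_middle_informative (is_int (rho z) /\ 1 <= rho z) with
    | left He => RE (exist _ z He) (exist _ (t - floor t) (frac_part_bounds t Hn))
    | right _ => RV root
    end
  end.

Definition path_dist : point -> point -> R := tree_dist height meet.

Lemma vertex_ext (v w : vertex) : proj1_sig v = proj1_sig w -> v = w.
Proof. destruct v, w; simpl; intros ->. f_equal; apply proof_irrelevance. Qed.

Lemma edge_ext (e e' : edge) : proj1_sig e = proj1_sig e' -> e = e'.
Proof. destruct e, e'; simpl; intros ->. f_equal; apply proof_irrelevance. Qed.

Lemma edge_point_ext (e e' : edge) (t t' : {t : R | 0 < t < 1}) :
  proj1_sig e = proj1_sig e' -> proj1_sig t = proj1_sig t' -> @RE vertex edge e t = RE e' t'.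
Proof.
  intros He Ht. rewrite (edge_ext e e' He). f_equal.
  destruct t, t'; simpl in *; subst. f_equal; apply proof_irrelevance.
Qed.

Lemma vertex_of_val z : is_int (rho z) -> proj1_sig (vertex_of z) = z.
Proof. intros H. unfold vertex_of. destruct (excluded_middle_informative _); [reflexivity|contradiction]. Qed.

Lemma is_int_rho_top p : is_int (rho (top p)).
Proof. destruct p as [v|e t]; [exact (proj2_sig v)|exact (proj1 (proj2_sig e))]. Qed.

Lemma height_bounds p : 0 <= height p /\ height p <= rho (top p) < height p + 1.
Proof.
  destruct p as [v|[e [Hi He]] [t Ht]]; simpl; [pose proof (metric_ge0 HM x0 (proj1_sig v))|]; lra.
Qed.

Lemma int_gromov_sym x y : int_gromov x y = int_gromov y x.
Proof. unfold int_gromov. rewrite (gromov_sym HM). reflexivity. Qed.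

Lemma int_gromov_ge0 x y : 0 <= int_gromov x y.
Proof. apply int_le_floor; [apply is_int_0|apply (gromov_ge0 HM)]. Qed.

Lemma int_gromov_le x y : int_gromov x y <= floor (rho x).
Proof. apply floor_le, (gromov_le_l HM). Qed.

Lemma int_gromov_self x : is_int (rho x) -> int_gromov x x = rho x.
Proof. intros H. unfold int_gromov. rewrite (gromov_self HM). apply floor_int, H. Qed.

Lemma int_gromov_ultra x y z : Rmin (int_gromov x y) (int_gromov y z) <= int_gromov x z.
Proof. unfold int_gromov. rewrite <- floor_min. apply floor_le, (R_tree_gromov_ultra HT). Qed.

Lemma int_gromov_ray x s y :
  0 <= s <= rho x -> is_int s -> int_gromov (ray x s) y = Rmin s (int_gromov x y).
Proof. intros Hs Hi. unfold int_gromov. rewrite (gromov_ray HT) by exact Hs. apply floor_min_int, Hi. Qed.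

Lemma height_ge0 p : 0 <= height p.
Proof. apply height_bounds. Qed.

Lemma meet_ge0 p q : 0 <= meet p q.
Proof.
  unfold meet. pose proof (height_ge0 p). pose proof (height_ge0 q).
  pose proof (int_gromov_ge0 (top p) (top q)). destruct_min_max; lra.
Qed.

Lemma meet_sym p q : meet p q = meet q p.
Proof. unfold meet. rewrite int_gromov_sym, (Rmin_comm (height p)). reflexivity. Qed.

Lemma meet_le p q : meet p q <= height p.
Proof. unfold meet. destruct_min_max; lra. Qed.

Lemma meet_self p : meet p p = height p.
Proof.
  unfold meet. rewrite int_gromov_self by apply is_int_rho_top.
  pose proof (height_bounds p). destruct_min_max; lra.
Qed.

Lemma meet_ultra p q r : Rmin (meet p r) (meet r q) <= meet p q.
Proof. unfold meet. pose proof (int_gromov_ultra (top p) (top r) (top q)). destruct_min_max; lra. Qed.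

(* Equal heights and [meet] force equal integer parts of the heights of the tops,
   hence equal tops by [eq_of_gromov], and then equal parameters. *)
Lemma eq_of_meet p q : height p = height q -> meet p q = height p -> p = q.
Proof.
  intros Hh Hm. unfold meet in Hm.
  assert (Hk : height p <= int_gromov (top p) (top q)) by (destruct_min_max; lra).
  assert (Hg : height p <= gp (top p) (top q)).
  { pose proof (floor_spec (gp (top p) (top q))). unfold int_gromov in Hk. lra. }
  pose proof (gromov_le_l HM x0 (top p) (top q)). pose proof (gromov_le_r HM x0 (top p) (top q)).
  destruct p as [v|[e [Hi He]] [t Ht]]; destruct q as [w|[e' [Hi' He']] [t' Ht']]; simpl in *.
  - f_equal. apply vertex_ext, (eq_of_gromov HM x0); lra.
  - exfalso. apply (not_is_int_add_frac (rho e' - 1) t'); [apply is_int_sub; [exact Hi'|apply is_int_1]|exact Ht'|].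
    rewrite <- Hh. exact (proj2_sig v).
  - exfalso. apply (not_is_int_add_frac (rho e - 1) t); [apply is_int_sub; [exact Hi|apply is_int_1]|exact Ht|].
    rewrite Hh. exact (proj2_sig w).
  - assert (Ee : rho e = rho e') by (apply int_eq_close; [exact Hi|exact Hi'|lra|lra]).
    assert (Hk' : rho e <= int_gromov e e').
    { pose proof (int_lt_le (rho e - 1) (int_gromov e e')
        (is_int_sub _ _ Hi is_int_1) (is_int_floor _) ltac:(lra)). lra. }
    apply edge_point_ext; simpl; [|lra].
    apply (eq_of_gromov HM x0); [lra|]. pose proof (floor_spec (gp e e')). unfold int_gromov in Hk'. lra.
Qed.

Lemma ancestor_spec p t : 0 <= t <= height p -> height (ancestor p t) = t /\
  exists c, t <= c /\ forall y, int_gromov (top (ancestor p t)) y = Rmin c (int_gromov (top p) y).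
Proof.
  intros Ht. pose proof (height_bounds p) as [_ [Hb1 Hb2]]. pose proof (is_int_rho_top p) as Hri.
  unfold ancestor. destruct (Req_dec_T (floor t) t) as [Hint|Hn].
  - assert (Hti : is_int t) by (rewrite <- Hint; apply is_int_floor).
    assert (Hv : is_int (rho (ray (top p) t))) by (rewrite (dist_base_ray HT x0) by lra; exact Hti).
    simpl. rewrite vertex_of_val, (dist_base_ray HT x0) by lra || exact Hv. split; [reflexivity|].
    exists t. split; [lra|]. intros y. apply int_gromov_ray; [lra|exact Hti].
  - pose proof (floor_spec t) as Hft.
    assert (H1 : floor t + 1 <= rho (top p)) by (apply int_lt_le; [apply is_int_floor|exact Hri|lra]).
    assert (H0 : 0 <= floor t) by (apply int_le_floor; [apply is_int_0|lra]).
    assert (Hz : rho (ray (top p) (floor t + 1)) = floor t + 1) by (apply (dist_base_ray HT x0); lra).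
    assert (Hzi : is_int (floor t + 1)) by (apply is_int_add; [apply is_int_floor|apply is_int_1]).
    destruct (excluded_middle_informative _) as [He|Hne].
    + simpl. rewrite Hz. split; [ring|]. exists (floor t + 1). split; [lra|].
      intros y. apply int_gromov_ray; [lra|exact Hzi].
    + exfalso. apply Hne. rewrite Hz. split; [exact Hzi|lra].
Qed.

Lemma height_ancestor p t : 0 <= t <= height p -> height (ancestor p t) = t.
Proof. intros H. apply (ancestor_spec p t H). Qed.

Lemma meet_ancestor p t q : 0 <= t <= height p -> meet (ancestor p t) q = Rmin t (meet p q).
Proof.
  intros H. destruct (ancestor_spec p t H) as [Eh [c [Hc Ek]]].
  unfold meet. rewrite Eh, Ek. destruct_min_max; lra.
Qed.

Lemma point_height_tree : is_height_tree height meet ancestor.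
Proof.
  split; [exact height_ge0|exact meet_ge0|exact meet_sym|exact meet_le|exact meet_self
         |exact meet_ultra|exact eq_of_meet|exact height_ancestor|exact meet_ancestor].
Qed.

Let HH := point_height_tree.

Lemma path_dist_metric : is_metric path_dist.
Proof. exact (tree_dist_metric HH). Qed.

Lemma path_dist_R_tree : is_R_tree path_dist.
Proof. exact (tree_dist_R_tree HH). Qed.

Definition top_vertex (p : point) : vertex := exist _ (top p) (is_int_rho_top p).

Lemma meet_top_vertex p : meet (RV (top_vertex p)) p = height p.
Proof.
  unfold meet. simpl. rewrite int_gromov_self by apply is_int_rho_top.
  pose proof (height_bounds p). destruct_min_max; lra.
Qed.

Lemma ancestor_top_vertex p t : 0 <= t <= height p -> ancestor (RV (top_vertex p)) t = ancestor p t.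
Proof.
  intros Ht. pose proof (height_bounds p). apply (anc_agree HH); simpl; try lra.
  rewrite meet_top_vertex. lra.
Qed.

Lemma edge_src_val (e : edge) :
  proj1_sig (edge_src e) = ray (proj1_sig e) (rho (proj1_sig e) - 1) /\
  rho (proj1_sig (edge_src e)) = rho (proj1_sig e) - 1.
Proof.
  destruct e as [z [Hi H1]]. simpl. pose proof (metric_ge0 HM x0 z).
  assert (E : rho (ray z (rho z - 1)) = rho z - 1) by (apply (dist_base_ray HT x0); lra).
  unfold edge_src. simpl. rewrite vertex_of_val; [|rewrite E; apply is_int_sub; [exact Hi|apply is_int_1]].
  split; [reflexivity|exact E].
Qed.

Lemma on_edge_ancestor (e : edge) p s : on_edge edge_src edge_tgt e p s ->
  0 <= s <= 1 /\ p = ancestor (RV (edge_tgt e)) (rho (proj1_sig e) - 1 + s).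
Proof.
  pose proof (edge_src_val e) as [Sv Sr].
  set (z := proj1_sig e) in *. set (N := rho z) in *.
  assert (Hi : is_int N) by exact (proj1 (proj2_sig e)).
  assert (H1 : 1 <= N) by exact (proj2 (proj2_sig e)).
  assert (Hzz : int_gromov z z = N) by (apply int_gromov_self; exact Hi).
  assert (Hhigh : forall p, height p <= N -> top p = z -> meet (RV (edge_tgt e)) p = height p).
  { intros q Hq Ht. unfold meet. simpl. fold z N. rewrite Ht, Hzz. pose proof (height_ge0 q).
    destruct_min_max; lra. }
  assert (Hsrc : meet (RV (edge_tgt e)) (RV (edge_src e)) = N - 1).
  { unfold meet. simpl. fold z N. rewrite Sr, Sv, int_gromov_sym, int_gromov_ray, Hzz.
    - destruct_min_max; lra.
    - unfold N in *; lra.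
    - apply is_int_sub; [exact Hi|apply is_int_1]. }
  intros [[-> ->]|[[-> ->]|[h ->]]].
  all: split; [lra|].
  all: symmetry.
  - replace (N - 1 + 0) with (height (RV (edge_src e)))
      by (change (rho (proj1_sig (edge_src e)) = N - 1 + 0); lra).
    apply (anc_of_meet HH).
    + change (rho (proj1_sig (edge_src e)) <= N). lra.
    + rewrite Hsrc. symmetry. exact Sr.
  - replace (N - 1 + 1) with (height (RV (edge_tgt e))) by (simpl; fold z N; lra).
    apply (anc_height HH).
  - change (N - 1 + s) with (height (RE e (exist (fun t => 0 < t < 1) s h))).
    apply (anc_of_meet HH); [simpl; fold z N; lra|apply Hhigh; simpl; [fold z N; lra|reflexivity]].
Qed.

Lemma ancestor_on_edge (e : edge) a : rho (proj1_sig e) - 1 <= a <= rho (proj1_sig e) ->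
  on_edge edge_src edge_tgt e (ancestor (RV (edge_tgt e)) a) (a - rho (proj1_sig e) + 1).
Proof.
  intros Ha. set (N := rho (proj1_sig e)) in *.
  destruct (Req_dec a (N - 1)) as [E1|N1]; [|destruct (Req_dec a N) as [E2|N2]].
  - left. split; [|lra]. symmetry. replace a with (N - 1 + 0) by lra.
    exact (proj2 (on_edge_ancestor e _ _ (or_introl (conj eq_refl eq_refl)))).
  - right; left. split; [|lra]. symmetry. replace a with (N - 1 + 1) by lra.
    exact (proj2 (on_edge_ancestor e _ _ (or_intror (or_introl (conj eq_refl eq_refl))))).
  - right; right. assert (h : 0 < a - N + 1 < 1) by lra. exists h. symmetry.
    etransitivity; [exact (proj2 (on_edge_ancestor e _ _ (or_intror (or_intror (ex_intro _ h eq_refl)))))|].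
    f_equal. unfold N. ring.
Qed.

Lemma path_dist_edge_step p r c : edge_step edge_src edge_tgt p r c -> path_dist p r = c.
Proof.
  intros (e & s & t & Hp & Hr & ->).
  destruct (on_edge_ancestor e p s Hp) as [Hs ->]. destruct (on_edge_ancestor e r t Hr) as [Ht ->].
  pose proof (proj2 (proj2_sig e)).
  unfold path_dist. rewrite (tree_dist_anc HH) by (simpl; lra). f_equal. ring.
Qed.

Lemma chain_within_edge (e : edge) a b :
  rho (proj1_sig e) - 1 <= a <= rho (proj1_sig e) -> rho (proj1_sig e) - 1 <= b <= rho (proj1_sig e) ->
  chain edge_src edge_tgt (ancestor (RV (edge_tgt e)) a) (ancestor (RV (edge_tgt e)) b) (Rabs (a - b)).
Proof.
  intros Ha Hb. apply chain_step.
  exists e, (a - rho (proj1_sig e) + 1), (b - rho (proj1_sig e) + 1).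
  split; [apply ancestor_on_edge, Ha|]. split; [apply ancestor_on_edge, Hb|]. f_equal. ring.
Qed.

Lemma chain_descent_in_edge p t : 1 <= rho (top p) -> rho (top p) - 1 <= t <= height p ->
  chain edge_src edge_tgt p (ancestor p t) (height p - t).
Proof.
  intros H1 Ht. pose proof (height_bounds p) as [Hb0 [Hb1 Hb2]].
  set (e := exist (fun z => is_int (rho z) /\ 1 <= rho z) (top p) (conj (is_int_rho_top p) H1) : edge).
  assert (Ete : edge_tgt e = top_vertex p) by (apply vertex_ext; reflexivity).
  rewrite <- (ancestor_top_vertex p t), <- Ete by lra.
  rewrite <- (anc_of_meet HH p (RV (top_vertex p))) at 1 by (simpl; lra || apply meet_top_vertex).
  rewrite <- Ete. eapply chain_eq_len; [apply chain_within_edge; simpl; lra|destruct_abs; lra].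
Qed.

Lemma chain_descent p t : 0 <= t <= height p -> chain edge_src edge_tgt p (ancestor p t) (height p - t).
Proof.
  destruct (INR_unbounded (height p)) as [n Hn].
  assert (Hp : height p <= INR n) by lra. clear Hn. revert p t Hp.
  induction n as [|n IH]; intros p t Hp Ht.
  - simpl in Hp. replace t with (height p) by (pose proof (height_ge0 p); lra).
    rewrite (anc_height HH), Rminus_diag. apply chain_nil.
  - rewrite S_INR in Hp. destruct (Rle_dec (height p) (INR n)) as [Hle|Hgt]; [apply IH; lra|].
    pose proof (height_bounds p) as [Hb0 [Hb1 Hb2]]. pose proof (pos_INR n).
    assert (Htop : rho (top p) = INR n + 1).
    { pose proof (int_lt_le (INR n) (rho (top p)) (is_int_INR n) (is_int_rho_top p) ltac:(lra)).
      pose proof (int_lt_le (rho (top p)) (INR n + 2) (is_int_rho_top p)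
        (is_int_add _ _ (is_int_INR n) (is_int_add _ _ is_int_1 is_int_1)) ltac:(lra)). lra. }
    destruct (Rle_dec (INR n) t) as [Hnt|Hnt]; [apply chain_descent_in_edge; lra|].
    pose proof (chain_descent_in_edge p (INR n) ltac:(lra) ltac:(lra)) as C1.
    pose proof (IH (ancestor p (INR n)) t) as C2.
    rewrite (height_ancestor p (INR n)), (anc_anc HH) in C2 by lra.
    eapply chain_eq_len; [exact (chain_app _ _ _ _ _ _ _ C1 (C2 ltac:(lra) ltac:(lra)))|ring].
Qed.

Lemma chain_path_dist p q : chain edge_src edge_tgt p q (path_dist p q).
Proof.
  pose proof (meet_ge0 p q). pose proof (meet_le p q). pose proof (meet_le q p). rewrite meet_sym in H1.
  set (M := meet p q) in *.
  pose proof (chain_descent p M ltac:(lra)) as C1. pose proof (chain_descent q M ltac:(lra)) as C2.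
  rewrite (anc_agree HH p q M) in C1 by (unfold M in *; lra).
  eapply chain_eq_len; [exact (chain_app _ _ _ _ _ _ _ C1 (chain_rev _ _ _ _ _ C2))|].
  unfold path_dist, tree_dist. fold M. ring.
Qed.

Lemma path_dist_is_path_metric : is_path_metric edge_src edge_tgt path_dist.
Proof.
  intros p q. split.
  - intros L. apply (chain_len_ge _ _ _ _ _ _ path_dist_metric path_dist_edge_step).
  - intros m Hm. apply Hm, chain_path_dist.
Qed.

Lemma edges_simplicial : simplicial_graph edge_src edge_tgt.
Proof.
  split.
  - intros e E. pose proof (edge_src_val e) as [_ Sr]. rewrite E in Sr. simpl in Sr. lra.
  - intros e e' [[E1 E2]|[E1 E2]].
    + apply edge_ext. exact (f_equal (@proj1_sig _ _) E2).
    + exfalso. pose proof (edge_src_val e) as [_ S1]. pose proof (edge_src_val e') as [_ S2].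
      rewrite E1 in S1. rewrite <- E2 in S2. simpl in S1, S2. lra.
Qed.

Definition vertex_below (x : X) : point := RV (vertex_of (ray x (floor (rho x)))).

Lemma vertex_below_spec x :
  height (vertex_below x) = floor (rho x) /\ top (vertex_below x) = ray x (floor (rho x)).
Proof.
  pose proof (floor_spec (rho x)). pose proof (metric_ge0 HM x0 x).
  assert (Hf0 : 0 <= floor (rho x)) by (apply int_le_floor; [apply is_int_0|lra]).
  assert (E : rho (ray x (floor (rho x))) = floor (rho x)) by (apply (dist_base_ray HT x0); lra).
  unfold vertex_below. simpl. rewrite vertex_of_val by (rewrite E; apply is_int_floor).
  split; [exact E|reflexivity].
Qed.

Lemma path_dist_vertex_below a b :
  path_dist (vertex_below a) (vertex_below b) = floor (rho a) + floor (rho b) - 2 * floor (gp a b).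
Proof.
  destruct (vertex_below_spec a) as [Ha Ra]. destruct (vertex_below_spec b) as [Hb Rb].
  pose proof (floor_spec (rho a)). pose proof (floor_spec (rho b)).
  pose proof (metric_ge0 HM x0 a). pose proof (metric_ge0 HM x0 b).
  assert (H0a : 0 <= floor (rho a)) by (apply int_le_floor; [apply is_int_0|lra]).
  assert (H0b : 0 <= floor (rho b)) by (apply int_le_floor; [apply is_int_0|lra]).
  unfold path_dist, tree_dist, meet. rewrite Ha, Hb, Ra, Rb.
  rewrite int_gromov_ray by (lra || apply is_int_floor). rewrite int_gromov_sym.
  rewrite int_gromov_ray by (lra || apply is_int_floor).
  pose proof (int_gromov_le b a) as K1. pose proof (int_gromov_le a b) as K2. rewrite int_gromov_sym in K2.
  unfold int_gromov in *. rewrite (gromov_sym HM x0 b a) in *. destruct_min_max; lra.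
Qed.

(* Truncating [rho] and the Gromov product to integers moves each by less than 1. *)
Lemma vertex_below_dist a b :
  d a b - 2 <= path_dist (vertex_below a) (vertex_below b) <= d a b + 2.
Proof.
  rewrite path_dist_vertex_below, (dist_gromov d x0 a b).
  pose proof (floor_spec (rho a)). pose proof (floor_spec (rho b)). pose proof (floor_spec (gp a b)). lra.
Qed.

Lemma vertex_below_near p : exists x, path_dist p (vertex_below x) <= 2.
Proof.
  pose proof (height_bounds p) as [Hb0 [Hb1 Hb2]].
  set (y := ray (top p) (height p)). exists y.
  assert (Ey : rho y = height p) by (apply (dist_base_ray HT x0); lra).
  destruct (vertex_below_spec y) as [Hy Ry]. rewrite Ey in Hy, Ry.
  pose proof (floor_spec (height p)).
  assert (Hf0 : 0 <= floor (height p)) by (apply int_le_floor; [apply is_int_0|lra]).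
  assert (Ek : int_gromov y (top p) = floor (height p)).
  { unfold y, int_gromov. rewrite (gromov_ray HT), (gromov_self HM) by lra. f_equal. destruct_min_max; lra. }
  unfold path_dist, tree_dist, meet. rewrite Hy, Ry, int_gromov_sym, int_gromov_ray, Ek.
  - destruct_min_max; lra.
  - rewrite Ey; lra.
  - apply is_int_floor.
Qed.

End SimplicialTree.

Lemma no_empty_point (p : real_pt Empty_set Empty_set) : False.
Proof. destruct p as [[]|[] _]. Qed.

Lemma empty_simplicial_tree :
  is_simplicial_tree (fun e : Empty_set => e) (fun e : Empty_set => e)
    (fun _ _ : real_pt Empty_set Empty_set => 0).
Proof.
  split; [split; intros []|split].
  - intros p; destruct (no_empty_point p).
  - split; [split; [|split; [|split]]|]; intros p; destruct (no_empty_point p).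
Qed.

Theorem proposition4p4 :
  forall (X : Type) (d : X -> X -> R),
    is_R_tree d ->
    exists (V E : Type) (src tgt : E -> V) (D : real_pt V E -> real_pt V E -> R),
      is_simplicial_tree src tgt D /\
      exists f : X -> real_pt V E, is_1C_quasi_isometry d D 2 f.
Proof.
  intros X d HT. destruct (classic (inhabited X)) as [[x0]|Hempty].
  - exists (vertex d x0), (edge d x0), (edge_src d HT x0), (edge_tgt d x0), (path_dist d x0).
    split; [split; [|split]|exists (vertex_below d HT x0); split].
    + exact (edges_simplicial d HT x0).
    + exact (path_dist_is_path_metric d HT x0).
    + exact (path_dist_R_tree d HT x0).
    + exact (vertex_below_dist d HT x0).
    + exact (vertex_below_near d HT x0).
  - exists Empty_set, Empty_set, (fun e => e), (fun e => e), (fun _ _ => 0).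
    split; [exact empty_simplicial_tree|].
    exists (fun x => False_rect _ (Hempty (inhabits x))). split.
    + intros a; destruct (Hempty (inhabits a)).
    + intros p; destruct (no_empty_point p).
Qed.
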